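(* Let $\mathcal V$ be a quaternionic Hermitian vector space of real dimension $4n$ with $n>1$, and let $\gamma_I,\gamma_J,\gamma_K\in\Lambda^2\mathcal V^*$ satisfy $$\gamma_I\wedge\omega_J=\gamma_J\wedge\omega_I,\qquad \gamma_J\wedge\omega_K=\gamma_K\wedge\omega_J,\qquad \gamma_K\wedge\omega_I=\gamma_I\wedge\omega_K .$$ Then $\langle\gamma_I,\omega_I\rangle=\langle\gamma_J,\omega_J\rangle=\langle\gamma_K,\omega_K\rangle$, and $\gamma_A=c\,\omega_A$ for $A=I,J,K$, where $2n\,c=\langle\gamma_I,\omega_I\rangle$.
   Context: $\mathcal V$ is a real $4n$-dimensional vector space with inner product $\langle\cdot,\cdot\rangle$ and endomorphisms $I,J,K$ with $I^2=J^2=-1$, $K=IJ=-JI$, $\langle Ax,Ay\rangle=\langle x,y\rangle$; $\omega_A(x,y)=\langle x,Ay\rangle$. The inner product on 2-forms is $\langle a,b\rangle=\tfrac12\sum_{i,j}a(e_i,e_j)b(e_i,e_j)$ for an orthonormal basis $\{e_i\}$; $\wedge$ is the exterior product of forms. *)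

From HB Require Import structures.
From mathcomp Require Import all_boot all_order all_algebra.
Set Implicit Arguments. Unset Strict Implicit. Unset Printing Implicit Defensive.
Import Order.TTheory GRing.Theory Num.Theory.
Local Open Scope ring_scope.

(* The space V is modelled as column vectors 'cV[R]_N (N = 4n) with the
   standard Euclidean inner product (i.e. coordinates in an orthonormal basis
   e_i = delta_mx i 0). *)

Definition ip (R : pzRingType) (N : nat) (x y : 'cV[R]_N) : R :=
  \sum_(i < N) x i 0 * y i 0.

Definition evec (R : pzRingType) (N : nat) (i : 'I_N) : 'cV[R]_N := delta_mx i 0.

(* 2-forms are represented by their matrices a i j = a(e_i, e_j) *)
Definition skew_mx2 (R : pzRingType) (N : nat) (a : 'M[R]_N) : Prop := a^T = - a.

Definition omega (R : pzRingType) (N : nat) (A : 'M[R]_N) : 'M[R]_N :=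
  \matrix_(i, j) ip (evec R i) (A *m evec R j).

(* exterior product of two 2-forms, evaluated on basis quadruples
   (sum over (2,2)-shuffles with signs) *)
Definition wedge2 (R : pzRingType) (N : nat) (a b : 'M[R]_N)
    : 'I_N -> 'I_N -> 'I_N -> 'I_N -> R :=
  fun i j k l =>
    a i j * b k l - a i k * b j l + a i l * b j k
  + a j k * b i l - a j l * b i k + a k l * b i j.

Definition fdot (R : fieldType) (N : nat) (a b : 'M[R]_N) : R :=
  2^-1 * \sum_(i < N) \sum_(j < N) a i j * b i j.

Definition quat_herm (R : pzRingType) (N : nat) (I J K : 'M[R]_N) : Prop :=
  [/\ I *m I = - 1%:M, J *m J = - 1%:M, K = I *m J, K = - (J *m I)
    & forall A, A \in [:: I; J; K] ->
        forall x y : 'cV[R]_N, ip (A *m x) (A *m y) = ip x y].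

From HB Require Import structures.
From mathcomp Require Import all_boot all_order all_algebra ring.
Import Order.TTheory GRing.Theory Num.Theory.
Local Open Scope ring_scope.
Set Implicit Arguments. Unset Strict Implicit.

(* In an orthonormal basis a 2-form is a skew matrix and
   omega_A is the matrix A itself (omegaE); I, J, K are skew (being orthogonal
   complex structures) and form a quaternionic frame (quat_frame).

   1. Contracting the 4-form wedge2 a b with a skew matrix m on its last two
      slots gives <b,m> a + <a,m> b + 2 (a m b + b m a) (wedge2_contract),
      where <x,y> = sum_kl x_kl y_kl is the Frobenius product mdot.
   2. For a frame (A, B, C = AB) and a relation wedge2 P B = wedge2 Q A,
      contracting with m = B shows that (N-4) P lies in the span of A, B and
      a commutator [Q, C]; this span is fixed by X |-> C X C, so P
      anticommutes with C (wedge_anticomm).  Contracting with m = A then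
      gives (N-4) Q = <P,A> B + 4 P C once Q anticommutes with A (wedge_step).
   3. The three hypotheses are this relation for the three cyclic frames
      (I,J,K), (J,K,I), (K,I,J); the three resulting equations, substituted
      into each other, give (a^3 + 64) gI = c I with a = 4n - 4 > 0, so
      gI = x I (frame_cycle), and then gJ = x J, gK = x K (frame_scalar_step).
   4. Finally <x A, omega_A> = x * 4n / 2 = 2n x for every A, whence x = c. *)

Section Coordinates.
Variables (R : comPzRingType) (N : nat).
Implicit Types (a b m x y : 'M[R]_N).

(* The Frobenius pairing of matrices; on 2-forms it is twice fdot. *)
Definition mdot a b := \sum_(k < N) \sum_(l < N) a k l * b k l.

Lemma mdot_trace a b : mdot a b = \tr (a *m b^T).
Proof.
rewrite /mdot /mxtrace; apply: eq_bigr => k _; rewrite mxE.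
by apply: eq_bigr => l _; rewrite mxE.
Qed.

Lemma mdotZl (t : R) a b : mdot (t *: a) b = t * mdot a b.
Proof.
rewrite /mdot mulr_sumr; apply: eq_bigr => k _; rewrite mulr_sumr.
by apply: eq_bigr => l _; rewrite mxE mulrA.
Qed.

Lemma mdot_complex a : a^T = - a -> a *m a = - 1%:M -> mdot a a = N%:R.
Proof. by move=> sa ha; rewrite mdot_trace sa mulmxN ha opprK mxtrace1. Qed.

Lemma mul_delta_col a (j k : 'I_N) : (a *m (delta_mx j 0 : 'cV_N)) k 0 = a k j.
Proof. by rewrite -colE mxE. Qed.

Lemma omegaE a : omega a = a.
Proof.
apply/matrixP=> i j; rewrite /omega /ip /evec mxE (bigD1 i) //= big1 ?addr0.
  by rewrite mul_delta_col mxE !eqxx mul1r.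
by move=> k /negPf ki; rewrite mxE ki mul0r.
Qed.

Lemma isometry_orthogonal a :
  (forall x y : 'cV[R]_N, ip (a *m x) (a *m y) = ip x y) -> a^T *m a = 1%:M.
Proof.
move=> iso; apply/matrixP=> i j.
have := iso (delta_mx i 0) (delta_mx j 0); rewrite /ip !mxE => e.
transitivity (\sum_(k < N) (delta_mx i 0 : 'cV[R]_N) k 0 * (delta_mx j 0 : 'cV_N) k 0).
  by rewrite -e; apply: eq_bigr => k _; rewrite !mul_delta_col mxE.
rewrite (bigD1 i) //= big1 ?addr0.
  by rewrite !mxE !eqxx mul1r andbT.
by move=> k /negPf ki; rewrite mxE ki mul0r.
Qed.

(* An orthogonal complex structure is skew: a^T = a^T (- a a) = - a. *)
Lemma orthogonal_complex_skew a : a^T *m a = 1%:M -> a *m a = - 1%:M -> a^T = - a.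
Proof. by move=> oa ha; rewrite -[a^T]mulmx1 -[1%:M]opprK -ha mulmxN mulmxA oa mul1mx. Qed.

Lemma contract_pair x y m (i j : 'I_N) :
  \sum_(k < N) \sum_(l < N) x i k * y j l * m k l = (x *m m *m y^T) i j.
Proof.
rewrite mxE exchange_big /=; apply: eq_bigr => l _; rewrite !mxE mulr_suml.
by apply: eq_bigr => k _; rewrite mulrAC.
Qed.

Lemma contract_pair_tr x y m (i j : 'I_N) :
  \sum_(k < N) \sum_(l < N) x i l * y j k * m k l = (x *m m^T *m y^T) i j.
Proof.
rewrite exchange_big -contract_pair; apply: eq_bigr => l _.
by apply: eq_bigr => k _; rewrite mxE.
Qed.

Definition contract4 (w : 'I_N -> 'I_N -> 'I_N -> 'I_N -> R) m : 'M[R]_N :=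
  \matrix_(i, j) \sum_(k < N) \sum_(l < N) w i j k l * m k l.

Lemma wedge2_contract a b m : a^T = - a -> b^T = - b -> m^T = - m ->
  contract4 (wedge2 a b) m =
  mdot b m *: a + mdot a m *: b + 2 *: (a *m m *m b + b *m m *m a).
Proof.
move=> sa sb sm; apply/matrixP=> i j; rewrite !mxE /wedge2.
under eq_bigr do under eq_bigr do rewrite !(mulrDl, mulNr).
under eq_bigr do rewrite !(big_split, sumrN) /=.
rewrite !(big_split, sumrN) /=.
have outer (t : R) x y : \sum_(k < N) \sum_(l < N) t * x k l * y k l = t * mdot x y.
  by rewrite /mdot mulr_sumr; apply: eq_bigr => k _; rewrite mulr_sumr;
     apply: eq_bigr => l _; rewrite mulrA.
have shuffle1 := outer (a i j) b m.
have shuffle2 : \sum_(k < N) \sum_(l < N) a i k * b j l * m k l = - (a *m m *m b) i j.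
  by rewrite contract_pair sb mulmxN mxE.
have shuffle3 : \sum_(k < N) \sum_(l < N) a i l * b j k * m k l = (a *m m *m b) i j.
  by rewrite contract_pair_tr sb sm !mulmxN mulNmx opprK.
have shuffle4 : \sum_(k < N) \sum_(l < N) a j k * b i l * m k l = (b *m m *m a) i j.
  transitivity ((b *m m^T *m a^T) i j); last by rewrite sa sm !mulmxN mulNmx opprK.
  rewrite -contract_pair_tr; apply: eq_bigr => k _.
  by apply: eq_bigr => l _; rewrite [a j k * _]mulrC.
have shuffle5 : \sum_(k < N) \sum_(l < N) a j l * b i k * m k l = - (b *m m *m a) i j.
  transitivity ((b *m m *m a^T) i j); last by rewrite sa mulmxN mxE.
  rewrite -contract_pair; apply: eq_bigr => k _.
  by apply: eq_bigr => l _; rewrite [a j l * _]mulrC.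
have shuffle6 : \sum_(k < N) \sum_(l < N) a k l * b i j * m k l = b i j * mdot a m.
  by rewrite -outer; apply: eq_bigr => k _; apply: eq_bigr => l _; rewrite [a k l * _]mulrC.
rewrite shuffle1 shuffle2 shuffle3 shuffle4 shuffle5 shuffle6 !mxE; ring.
Qed.

End Coordinates.

Record quat_frame (R : pzRingType) (N : nat) (A B C : 'M[R]_N) : Prop := QuatFrame {
  frame_AA : A *m A = - 1%:M;
  frame_BB : B *m B = - 1%:M;
  frame_AB : A *m B = C;
  frame_BA : B *m A = - C;
  frame_trA : A^T = - A;
  frame_trB : B^T = - B }.

Section Frame.
Variables (R : comPzRingType) (N : nat) (A B C : 'M[R]_N).
Hypothesis hF : quat_frame A B C.

Lemma frame_AC : A *m C = - B.
Proof. by rewrite -(frame_AB hF) mulmxA (frame_AA hF) mulNmx mul1mx. Qed.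

Lemma frame_CB : C *m B = - A.
Proof. by rewrite -(frame_AB hF) -mulmxA (frame_BB hF) mulmxN mulmx1. Qed.

Lemma frame_CA : C *m A = B.
Proof.
by rewrite -[C]opprK -(frame_BA hF) mulNmx -mulmxA (frame_AA hF) mulmxN mulmx1 opprK.
Qed.

Lemma frame_BC : B *m C = A.
Proof. by rewrite -(frame_AB hF) mulmxA (frame_BA hF) mulNmx frame_CB opprK. Qed.

Lemma frame_CC : C *m C = - 1%:M.
Proof. by rewrite -{1}(frame_AB hF) -mulmxA frame_BC (frame_AA hF). Qed.

Lemma frame_trC : C^T = - C.
Proof.
rewrite -(frame_AB hF) trmx_mul (frame_trA hF) (frame_trB hF).
by rewrite mulmxN mulNmx opprK (frame_BA hF) (frame_AB hF).
Qed.

Lemma frame_rot : quat_frame B C A.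
Proof.
by split; rewrite ?frame_BC ?frame_CB ?frame_CC ?frame_trC ?(frame_BB hF) ?(frame_trB hF).
Qed.

Lemma frame_conj_span (u v w : R) (M : 'M[R]_N) :
  C *m (u *: A + v *: B + w *: (M *m C - C *m M)) *m C =
  u *: A + v *: B + w *: (M *m C - C *m M).
Proof.
rewrite !(mulmxDr, mulmxDl) -!scalemxAr -!scalemxAl !(mulmxBr, mulmxBl).
rewrite frame_CA frame_BC frame_CB mulNmx frame_AC opprK.
rewrite !mulmxA -[C *m M *m C *m C]mulmxA frame_CC mulmxN mulmx1.
by rewrite !mulNmx mul1mx opprK [- _ + _]addrC.
Qed.
End Frame.

Lemma quat_herm_frame (R : comPzRingType) (N : nat) (I J K : 'M[R]_N) :
  quat_herm I J K -> quat_frame I J K.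
Proof.
case=> hI hJ hIJ hJI iso.
have skew X : X \in [:: I; J; K] -> X *m X = - 1%:M -> X^T = - X.
  by move=> /iso /isometry_orthogonal; apply: orthogonal_complex_skew.
split=> //.
- by rewrite hJI opprK.
- by apply: skew hI; rewrite !inE eqxx.
- by apply: skew hJ; rewrite !inE eqxx orbT.
Qed.

Section FrameField.
Variables (R : fieldType) (N : nat) (A B C : 'M[R]_N).
Hypothesis hF : quat_frame A B C.

(* A matrix proportional to an element of the span in frame_conj_span
   commutes with conjugation by C, i.e. anticommutes with C = - C^-1. *)
Lemma anticomm_of_span (a u v w : R) (P M : 'M[R]_N) : a != 0 ->
  a *: P = u *: A + v *: B + w *: (M *m C - C *m M) -> C *m P = - (P *m C).
Proof.
move=> a0 eP.
have fixP : C *m P *m C = P.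
  by apply: (scalerI a0); rewrite scalemxAl scalemxAr eP frame_conj_span.
by rewrite -{2}fixP -mulmxA (frame_CC hF) mulmxN mulmx1 opprK.
Qed.

(* Three linear relations linking P, Q, S cyclically through the frame force
   P to be a multiple of A: substituting them into each other gives
   (a^3 + 64) P = c A for an explicit scalar c. *)
Lemma frame_cycle (a p q s : R) (P Q S : 'M[R]_N) :
  a *: Q = p *: B + 4 *: (P *m C) ->
  a *: S = q *: C + 4 *: (Q *m A) ->
  a *: P = s *: A + 4 *: (S *m B) ->
  a ^+ 3 + 64 != 0 -> exists x, P = x *: A.
Proof.
move=> eQ eS eP ha.
have eSB : a *: (S *m B) = (- q) *: A + 4 *: (Q *m C).
  rewrite scalemxAl eS mulmxDl -!scalemxAl (frame_CB hF) -mulmxA (frame_AB hF).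
  by rewrite scalerN scaleNr.
have eQC : a *: (Q *m C) = p *: A - 4 *: P.
  rewrite scalemxAl eQ mulmxDl -!scalemxAl (frame_BC hF) -mulmxA (frame_CC hF).
  by rewrite mulmxN mulmx1 scalerN.
have eP2 : a *: (a *: P) = (a * s - 4 * q) *: A + 16 *: (Q *m C).
  rewrite eP scalerDr !scalerA [a * 4]mulrC -[(4 * a) *: _]scalerA eSB.
  by apply/matrixP=> i j; rewrite !mxE; ring.
have eP3 : (a ^+ 3 + 64) *: P = (a ^+ 2 * s - 4 * a * q + 16 * p) *: A.
  transitivity (a *: (a *: (a *: P)) + 64 *: P).
    by apply/matrixP=> i j; rewrite !mxE; ring.
  rewrite eP2 scalerDr !scalerA [a * 16]mulrC -[(16 * a) *: _]scalerA eQC.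
  by apply/matrixP=> i j; rewrite !mxE; ring.
exists ((a ^+ 2 * s - 4 * a * q + 16 * p) / (a ^+ 3 + 64)).
by apply: (scalerI ha); rewrite eP3 scalerA mulrCA mulfV ?mulr1.
Qed.

Lemma frame_scalar_step (x : R) (P Q : 'M[R]_N) : N%:R - 4 != 0 :> R ->
  (N%:R - 4) *: Q = mdot P A *: B + 4 *: (P *m C) -> P = x *: A -> Q = x *: B.
Proof.
move=> ha eQ eP; apply: (scalerI ha); rewrite eQ eP mdotZl.
rewrite mdot_complex ?(frame_trA hF) ?(frame_AA hF) // -scalemxAl (frame_AC hF).
by apply/matrixP=> i j; rewrite !mxE; ring.
Qed.
End FrameField.

(* Skew Y anticommuting with X is orthogonal to X: tr (X Y) = - tr (X Y). *)
Lemma mdot_anticomm (R : numFieldType) (N : nat) (X Y : 'M[R]_N) :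
  Y^T = - Y -> Y *m X = - (X *m Y) -> mdot X Y = 0.
Proof.
move=> sY hYX; rewrite mdot_trace sY mulmxN raddfN /=.
have e : \tr (X *m Y) = - \tr (X *m Y) by rewrite -raddfN /= -hYX mxtrace_mulC.
have : \tr (X *m Y) *+ 2 = 0 by rewrite mulr2n {2}e addrN.
by move/eqP; rewrite -mulr_natr mulf_eq0 pnatr_eq0 orbF => /eqP ->; rewrite oppr0.
Qed.

Lemma eq_by_diff (V : zmodType) (x y z w : V) : x = y -> z - w = x - y -> z = w.
Proof. by move=> ->; rewrite subrr => /eqP; rewrite subr_eq0 => /eqP. Qed.

Section WedgeRelation.
Variables (R : numFieldType) (N : nat) (A B C P Q : 'M[R]_N).
Hypotheses (hF : quat_frame A B C) (sP : P^T = - P) (sQ : Q^T = - Q).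
Hypothesis hw : wedge2 P B = wedge2 Q A.

(* Contraction of the relation with A. *)
Lemma wedge_contract_A :
  (N%:R - 4) *: Q = (- mdot Q A) *: A + mdot P A *: B + 2 *: (P *m C - C *m P).
Proof.
have := congr1 (fun w => contract4 w A) hw.
rewrite !wedge2_contract ?(frame_trA hF) ?(frame_trB hF) //.
rewrite mdot_complex ?(frame_trA hF) ?(frame_AA hF) //.
rewrite (@mdot_anticomm _ _ B A) ?(frame_trA hF) ?(frame_AB hF) ?(frame_BA hF) ?opprK //.
rewrite -!mulmxA (frame_AB hF) (frame_AA hF) !mulNmx !mulmxN mulmx1 mul1mx.
rewrite scale0r add0r => e.
by apply: (eq_by_diff (esym e)); apply/matrixP=> i j; rewrite !mxE; ring.
Qed.

(* Contraction of the relation with B. *)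
Lemma wedge_contract_B :
  (N%:R - 4) *: P = mdot Q B *: A + (- mdot P B) *: B + (- 2) *: (Q *m C - C *m Q).
Proof.
have := congr1 (fun w => contract4 w B) hw.
rewrite !wedge2_contract ?(frame_trA hF) ?(frame_trB hF) //.
rewrite mdot_complex ?(frame_trB hF) ?(frame_BB hF) //.
rewrite (@mdot_anticomm _ _ A B) ?(frame_trB hF) ?(frame_AB hF) ?(frame_BA hF) //.
rewrite -!mulmxA (frame_BB hF) (frame_BA hF).
rewrite !mulNmx !mulmxN mulmx1 mul1mx scale0r add0r => e.
by apply: (eq_by_diff e); apply/matrixP=> i j; rewrite !mxE; ring.
Qed.

Lemma wedge_anticomm : N%:R - 4 != 0 :> R -> C *m P = - (P *m C).
Proof. by move=> ha; apply: (anticomm_of_span hF ha wedge_contract_B). Qed.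

(* If moreover Q anticommutes with A, then <Q,A> = 0 and [P,C] = 2 P C. *)
Lemma wedge_step : N%:R - 4 != 0 :> R -> A *m Q = - (Q *m A) ->
  (N%:R - 4) *: Q = mdot P A *: B + 4 *: (P *m C).
Proof.
move=> ha hQA; rewrite wedge_contract_A (mdot_anticomm (frame_trA hF) hQA).
rewrite (wedge_anticomm ha) oppr0 scale0r add0r.
by apply/matrixP=> i j; rewrite !mxE; ring.
Qed.
End WedgeRelation.

Lemma fdot_complex (R : fieldType) (N : nat) (x : R) (X : 'M[R]_N) :
  X^T = - X -> X *m X = - 1%:M -> fdot (x *: X) X = x * N%:R / 2.
Proof.
move=> sX hX; rewrite (_ : fdot _ _ = 2^-1 * mdot (x *: X) X) //.
by rewrite mdotZl mdot_complex // mulrC.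
Qed.

Theorem lemma6p5 (R : realFieldType) (n : nat) (hn : (1 < n)%N)
    (I J K gI gJ gK : 'M[R]_(4 * n))
    (hQ : quat_herm I J K)
    (hgI : skew_mx2 gI) (hgJ : skew_mx2 gJ) (hgK : skew_mx2 gK)
    (h1 : wedge2 gI (omega J) = wedge2 gJ (omega I))
    (h2 : wedge2 gJ (omega K) = wedge2 gK (omega J))
    (h3 : wedge2 gK (omega I) = wedge2 gI (omega K)) :
  let c := fdot gI (omega I) / (2 * n)%:R in
  fdot gI (omega I) = fdot gJ (omega J) /\
  fdot gJ (omega J) = fdot gK (omega K) /\
  gI = c *: omega I /\ gJ = c *: omega J /\ gK = c *: omega K.
Proof.
rewrite !omegaE in h1 h2 h3 *.
have FI := quat_herm_frame hQ; have FJ := frame_rot FI; have FK := frame_rot FJ.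
have a_gt0 : 0 < (4 * n)%:R - 4 :> R.
  by rewrite subr_gt0 (_ : 4 = (4 * 1)%N%:R) ?ltr_nat ?ltn_pmul2l.
have ha := lt0r_neq0 a_gt0.
have E1 := wedge_step FI hgI hgJ h1 ha (wedge_anticomm FJ hgJ hgK h2 ha).
have E2 := wedge_step FJ hgJ hgK h2 ha (wedge_anticomm FK hgK hgI h3 ha).
have E3 := wedge_step FK hgK hgI h3 ha (wedge_anticomm FI hgI hgJ h1 ha).
have [x gIx] := frame_cycle FI E1 E2 E3 (lt0r_neq0 (addr_gt0 (exprn_gt0 3 a_gt0) (ltr0n _ 64))).
have gJx := frame_scalar_step FI ha E1 gIx.
have gKx := frame_scalar_step FJ ha E2 gJx.
move=> c; have -> : c = x.
  rewrite /c gIx fdot_complex ?(frame_trA FI) ?(frame_AA FI) // !natrM.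
  by field; rewrite pnatr_eq0 -lt0n ltnW.
by rewrite gIx gJx gKx !fdot_complex ?(frame_trA FI, frame_AA FI, frame_trA FJ,
  frame_AA FJ, frame_trA FK, frame_AA FK).
Qed.
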